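(* Let $d,\lambda_0,N_0\in\mathbb N$ and $\epsilon\in\left(0,\frac{1}{\lambda_0+1}\right)$ be given. There exists $c=c(\epsilon)>0$ such that the following holds for every positive integer $k\geq c\log d$: there is a scaling factor $\lambda_1=\lambda_1(\lambda_0,\epsilon,k,N_0)\in\mathbb N$ such that for every integer $\lambda\geq\lambda_1$ and for every point set $\mathcal{D}\subset\frac{\lambda}{\lambda_0}\mathbb Z^d\cap B_{\lambda N_0}$ with $|\mathcal{D}|=d$, there is a mapping $F:\mathcal{D}\to\frac{1}{\lambda_0}\mathbb Z^k$ such that for all $x,y\in\mathcal{D}$, \[ \left(1-\epsilon-\frac{\epsilon}{\lambda\lambda_0}\right)\|x-y\|\leq\|F(x)-F(y)\|\leq\left(1+\epsilon+\frac{\epsilon}{\lambda\lambda_0}\right)\|x-y\|. \]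
   Context: $\|\cdot\|$ denotes the Euclidean norm. $B_r$ denotes the closed Euclidean ball of radius $r$ centered at the origin in $\mathbb R^d$. For $s>0$ and $m\in\mathbb N$, $s\mathbb Z^m=\{s z: z\in\mathbb Z^m\}$. *)

From HB Require Import structures.
From mathcomp Require Import all_boot all_order all_algebra.
From mathcomp Require Export all_classical all_reals exp.
Set Implicit Arguments. Unset Strict Implicit. Unset Printing Implicit Defensive.
Import Order.TTheory GRing.Theory Num.Theory.
Local Open Scope ring_scope.

Definition enorm (R : realType) (n : nat) (v : 'rV[R]_n) : R :=
  Num.sqrt (\sum_(i < n) (v ord0 i) ^+ 2).

Definition in_scaled_lattice (R : realType) (n : nat) (s : R) (v : 'rV[R]_n) : Prop :=
  forall i : 'I_n, exists z : int, v ord0 i = s * z%:~R.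

Definition in_ball (R : realType) (n : nat) (r : R) (v : 'rV[R]_n) : Prop :=
  enorm v <= r.

(* Derandomized Johnson-Lindenstrauss followed by rounding.  For a fixed vector u,
   a moment bound for Rademacher sums and Chernoff's method show that at most a
   fraction 2 exp(-k e^2 / 8192) of the 2^(nk) sign matrices M distort |M u|^2 / k
   beyond (1 +- e) |u|^2.  When k >= 4 * 8192 / e^2 * ln d, a union bound over the
   d^2 differences of points of D leaves a matrix distorting none of them.  Rounding
   the image down to the lattice (1/lambda0) Z^k changes squared distances by at most
   k / lambda0^2, while distinct points of (lambda/lambda0) Z^d are at distance at
   least lambda/lambda0; once lambda > 4k/e^2 the error is below e^2/4 of every
   squared distance, and e = eps/2 gives distortion 1 +- eps. *)

From HB Require Import structures.
From mathcomp Require Import all_boot all_order all_algebra.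
From mathcomp Require Import all_classical all_reals exp.
From mathcomp Require Import sequences ring lra zify.
Import Order.TTheory GRing.Theory Num.Theory.
Local Open Scope ring_scope.
Set Implicit Arguments. Unset Strict Implicit. Unset Printing Implicit Defensive.

Section ExpBounds.
Variable R : realType.
Implicit Types x y : R.

Lemma expR_halfE x : expR x = expR (x / 2) ^+ 2.
Proof. by rewrite expr2 -expRD; congr expR; field. Qed.

Lemma expR_ge_sqr x : 0 <= x -> x ^+ 2 / 4 <= expR x.
Proof.
move=> x0; rewrite expR_halfE.
apply: le_trans (lerXn2r 2 _ _ (expR_ge1Dx (x / 2))); rewrite ?nnegrE ?expR_ge0 //; nra.
Qed.

Lemma expRN_le x : 0 <= x -> expR (- x) <= 1 - x + x ^+ 2.
Proof.
move=> x0; rewrite expRN -div1r ler_pdivrMr ?expR_gt0 //.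
have := expR_ge_sqr x0; have := expR_ge1Dx x.
have : 1 <= (1 - x + x ^+ 2) * (1 + x + x ^+ 2 / 4) by nra.
nra.
Qed.

Lemma expR_le_inv x : x < 1 -> expR x <= (1 - x)^-1.
Proof.
move=> x1; have := expR_ge1Dx (- x); rewrite expRN => h.
by rewrite -(invrK (expR x)) lef_pV2 ?posrE ?invr_gt0 ?expR_gt0 //; lra.
Qed.

Lemma expR_le_inv_sqr x : x < 2 -> expR x <= ((1 - x / 2) ^+ 2)^-1.
Proof.
move=> x2; rewrite expR_halfE -exprVn.
by apply: lerXn2r; rewrite ?nnegrE ?expR_ge0 ?invr_ge0 ?expR_le_inv //; lra.
Qed.

(* A crude form of [cosh y <= expR (y ^+ 2 / 2)]: the moment bound of a Rademacher sign. *)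
Lemma expR_add_expRN_le y : expR y + expR (- y) <= 2 * expR (2 * y ^+ 2).
Proof.
have [large|small] := lerP (1 / 2) `|y|.
  have le_y : `|y| <= 2 * y ^+ 2 by rewrite -real_normK ?num_real //; nra.
  have := ler_norm y; have := ler_norm (- y); rewrite normrN => ny ny'.
  have : expR y <= expR (2 * y ^+ 2) by rewrite ler_expR; lra.
  have : expR (- y) <= expR (2 * y ^+ 2) by rewrite ler_expR; lra.
  lra.
have /andP[ylo yhi] : - (1 / 2) < y < 1 / 2 by rewrite -ltr_norml.
set t := y / 2.
have ht : t ^+ 2 <= 1 / 16 by rewrite /t; nra.
have t1 : 0 < 1 - t by rewrite /t; lra.
have t2 : 0 < 1 + t by rewrite /t; lra.
have sum_inv : ((1 - t) ^+ 2)^-1 + ((1 + t) ^+ 2)^-1 <= 2 * (1 + 2 * y ^+ 2).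
  have -> : ((1 - t) ^+ 2)^-1 + ((1 + t) ^+ 2)^-1 =
      ((1 + t) ^+ 2 + (1 - t) ^+ 2) / ((1 - t) ^+ 2 * (1 + t) ^+ 2).
    by field; rewrite !lt0r_neq0.
  rewrite ler_pdivrMr ?mulr_gt0 ?exprn_gt0 // (_ : y = 2 * t); last by rewrite /t; field.
  nra.
have ey : expR y <= ((1 - t) ^+ 2)^-1 by apply: expR_le_inv_sqr; lra.
have eNy : expR (- y) <= ((1 + t) ^+ 2)^-1.
  by rewrite (_ : 1 + t = 1 - - y / 2); [apply: expR_le_inv_sqr; lra | rewrite /t; field].
have := expR_ge1Dx (2 * y ^+ 2); lra.
Qed.

End ExpBounds.

Fixpoint sign_vectors (n : nat) : seq (seq bool) :=
  if n is n'.+1 then map (cons true) (sign_vectors n') ++ map (cons false) (sign_vectors n')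
  else [:: [::]].

Lemma size_sign_vectors n : size (sign_vectors n) = (2 ^ n)%N.
Proof. by elim: n => //= n IH; rewrite size_cat !size_map IH expnS mul2n addnn. Qed.

Section RademacherSums.
Variable R : realType.
Implicit Types (u : seq R) (c s : R).

Fixpoint signed_sum (t : seq bool) u : R :=
  match t, u with
  | b :: t', a :: u' => (if b then a else - a) + signed_sum t' u'
  | _, _ => 0
  end.

(* [2 ^ size u] times the expectation of [f (c + X)], [X] a Rademacher sum with weights [u]. *)
Definition sign_sum (f : R -> R) u c : R :=
  \sum_(t <- sign_vectors (size u)) f (c + signed_sum t u).

Definition sumsq u : R := \sum_(a <- u) a ^+ 2.

Lemma sumsq_cons a u : sumsq (a :: u) = a ^+ 2 + sumsq u.
Proof. by rewrite /sumsq big_cons. Qed.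

Lemma sumsq_ge0 u : 0 <= sumsq u.
Proof. by apply: sumr_ge0 => a _; apply: sqr_ge0. Qed.

Lemma sign_sum_nil f c : sign_sum f [::] c = f c.
Proof. by rewrite /sign_sum big_seq1 addr0. Qed.

Lemma sign_sum_cons f a u c :
  sign_sum f (a :: u) c = sign_sum f u (c + a) + sign_sum f u (c - a).
Proof.
by rewrite /sign_sum /= big_cat !big_map; congr (_ + _); apply: eq_bigr => t _; rewrite addrA.
Qed.

Lemma sign_sum0 f u : sign_sum f u 0 = \sum_(t <- sign_vectors (size u)) f (signed_sum t u).
Proof. by apply: eq_bigr => t _; rewrite add0r. Qed.

Lemma sign_sum_sqr u c :
  sign_sum (fun x => x ^+ 2) u c = 2 ^+ size u * (c ^+ 2 + sumsq u).
Proof.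
elim: u c => [|a u IH] c; first by rewrite sign_sum_nil /sumsq big_nil addr0 mul1r.
by rewrite sign_sum_cons !IH sumsq_cons /= (exprS 2 (size u)); ring.
Qed.

Lemma signed_sum_scale t u r : signed_sum t [seq a * r | a <- u] = signed_sum t u * r.
Proof. by elim: u t => [|a u IH] [|[] t] //=; rewrite ?mul0r // IH; ring. Qed.

Lemma signed_sum_mapB (J : Type) t (s : seq J) (f g : J -> R) :
  signed_sum t [seq f j - g j | j <- s] = signed_sum t (map f s) - signed_sum t (map g s).
Proof. by elim: s t => [|j s IH] [|[] t] //=; rewrite ?subrr // IH; ring. Qed.

Definition mgf_rate s v : R := s / (1 - 8 * s * v).

Lemma mgf_rate_step s v w : 0 < s -> 0 <= v -> 0 <= w -> 8 * s * (w + v) < 1 ->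
  mgf_rate s v + 8 * mgf_rate s v ^+ 2 * w <= mgf_rate s (w + v).
Proof.
move=> s0 v0 w0 small; rewrite -subr_ge0.
set a := 1 - 8 * s * v; set b := 1 - 8 * s * (w + v).
have a0 : 0 < a by rewrite /a; nra.
have b0 : 0 < b by rewrite /b; lra.
have -> : mgf_rate s (w + v) - (mgf_rate s v + 8 * mgf_rate s v ^+ 2 * w) =
    64 * s ^+ 3 * w ^+ 2 / (a ^+ 2 * b).
  have ab : a - 8 * s * w = b by rewrite /a /b; ring.
  rewrite /mgf_rate -/a -/b -ab; field.
  by rewrite ab !lt0r_neq0.
by apply: divr_ge0; rewrite ?mulr_ge0 ?exprn_ge0 // ltW.
Qed.

Lemma sign_sum_expR_sqr_le s u c : 0 < s -> 8 * s * sumsq u < 1 ->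
  sign_sum (fun x => expR (s * x ^+ 2)) u c <=
  2 ^+ size u * expR (sumsq u * mgf_rate s (sumsq u)) * expR (mgf_rate s (sumsq u) * c ^+ 2).
Proof.
move=> s0; elim: u c => [|a u IH] c.
  by rewrite sign_sum_nil /mgf_rate /sumsq big_nil !mulr0 subr0 mul0r expR0 divr1 !mul1r.
rewrite sumsq_cons => small.
set v := sumsq u in small *; set w := a ^+ 2 in small *.
have v0 : 0 <= v := sumsq_ge0 u; have w0 : 0 <= w := sqr_ge0 a.
have small' : 8 * s * v < 1 by nra.
set b := mgf_rate s v; set b' := mgf_rate s (w + v).
have b0 : 0 <= b by rewrite divr_ge0 ?subr_ge0 ?ltW.
have step : b + 8 * b ^+ 2 * w <= b' := mgf_rate_step s0 v0 w0 small.
pose N : R := 2 ^+ size u.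
have N0 : 0 <= N by rewrite exprn_ge0.
pose E := N * expR (v * b) * expR (b * (c ^+ 2 + w)).
have E0 : 0 <= E by rewrite !mulr_ge0 ?expR_ge0.
set y := 2 * b * c * a.
(* Summing over the sign of [a], the cross term [y] of the exponent is averaged out. *)
have split_sign : sign_sum (fun x => expR (s * x ^+ 2)) (a :: u) c <= E * (expR y + expR (- y)).
  rewrite sign_sum_cons; apply: le_trans (lerD (IH _ small') (IH _ small')) _.
  rewrite -/b -/N /E (_ : b * (c + a) ^+ 2 = b * (c ^+ 2 + w) + y); last by rewrite /w /y; ring.
  rewrite (_ : b * (c - a) ^+ 2 = b * (c ^+ 2 + w) + - y); last by rewrite /w /y; ring.
  by rewrite !expRD; lra.
apply: (le_trans split_sign); apply: le_trans (ler_wpM2l E0 (expR_add_expRN_le y)) _.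
have -> : E * (2 * expR (2 * y ^+ 2)) =
    2 * N * expR (v * b + b * (c ^+ 2 + w) + 8 * b ^+ 2 * w * c ^+ 2).
  have -> : 2 * y ^+ 2 = 8 * b ^+ 2 * w * c ^+ 2 by rewrite /y /w; ring.
  by rewrite /E !expRD; ring.
have -> : 2 ^+ size (a :: u) * expR ((w + v) * b') * expR (b' * c ^+ 2) =
    2 * N * expR ((w + v) * b' + b' * c ^+ 2) by rewrite expRD /N /= (exprS 2 (size u)); ring.
rewrite ler_wpM2l ?mulr_ge0 // ler_expR.
have : (w + v) * b <= (w + v) * b'.
  by rewrite ler_wpM2l ?addr_ge0 // (le_trans _ step) // lerDl; nra.
have : (b + 8 * b ^+ 2 * w) * c ^+ 2 <= b' * c ^+ 2 by rewrite ler_wpM2r ?sqr_ge0.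
nra.
Qed.

End RademacherSums.

Fixpoint sign_matrices (k n : nat) : seq (seq (seq bool)) :=
  if k is k'.+1 then [seq r :: M | r <- sign_vectors n, M <- sign_matrices k' n]
  else [:: [::]].

Lemma size_sign_matrices k n : size (sign_matrices k n) = ((2 ^ n) ^ k)%N.
Proof. by elim: k => //= k IH; rewrite size_allpairs size_sign_vectors IH expnS. Qed.

Lemma size_mem_sign_matrices k n M : M \in sign_matrices k n -> size M = k.
Proof.
elim: k M => [|k IH] M /=; first by rewrite inE => /eqP ->.
by case/allpairsP => -[r M'] /= [_ /IH <- ->].
Qed.

Section SketchTails.
Variable R : realType.
Implicit Types (u : seq R) (e s : R).

Definition sketch_sqnorm (M : seq (seq bool)) u : R := \sum_(r <- M) signed_sum r u ^+ 2.

Definition sketch_good k e M u : bool :=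
  k%:R * (1 - e) * sumsq u <= sketch_sqnorm M u <= k%:R * (1 + e) * sumsq u.

Lemma sumsq_scale u r : sumsq [seq a * r | a <- u] = sumsq u * r ^+ 2.
Proof. by rewrite /sumsq big_map mulr_suml; apply: eq_bigr => a _; rewrite exprMn. Qed.

Lemma sketch_sqnorm_scale M u r :
  sketch_sqnorm M [seq a * r | a <- u] = sketch_sqnorm M u * r ^+ 2.
Proof.
by rewrite /sketch_sqnorm mulr_suml; apply: eq_bigr => t _; rewrite signed_sum_scale exprMn.
Qed.

Lemma sketch_good_scale k e M u (r : R) : r != 0 ->
  sketch_good k e M [seq a * r | a <- u] = sketch_good k e M u.
Proof.
move=> r0; have r2 : 0 < r ^+ 2 by rewrite exprn_even_gt0.
by rewrite /sketch_good sketch_sqnorm_scale sumsq_scale !(mulrA _ (sumsq u)) !(ler_pM2r r2).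
Qed.

Lemma sum_sign_matrices_expR s k n u :
  \sum_(M <- sign_matrices k n) expR (s * sketch_sqnorm M u) =
  (\sum_(r <- sign_vectors n) expR (s * signed_sum r u ^+ 2)) ^+ k.
Proof.
elim: k => [|k IH] /=; first by rewrite big_seq1 /sketch_sqnorm big_nil mulr0 expR0.
rewrite big_allpairs_dep exprS -IH mulr_suml; apply: eq_bigr => r _.
by rewrite mulr_sumr; apply: eq_bigr => M _; rewrite /sketch_sqnorm big_cons mulrDr expRD.
Qed.

Lemma expR_pow_le (P A b : R) k : 0 <= P -> P <= A * expR b ->
  P ^+ k <= A ^+ k * expR (k%:R * b).
Proof.
move=> P0 PA; rewrite expRM_natl -exprMn.
by apply: lerXn2r => //; rewrite nnegrE (le_trans P0 PA).
Qed.

(* Markov's inequality applied to [expR (s1 * Y)] and [expR (- s2 * Y)]. *)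
Lemma outside_le_expR (K e Y s1 s2 : R) : 0 <= s1 -> 0 <= s2 ->
  ~~ (K * (1 - e) <= Y <= K * (1 + e)) ->
  1 <= expR (s1 * (Y - K * (1 + e))) + expR (s2 * (K * (1 - e) - Y)).
Proof.
move=> s1_ge0 s2_ge0; rewrite negb_and -!ltNge => /orP[lo|hi].
  have : 1 <= expR (s2 * (K * (1 - e) - Y)).
    by rewrite -[leLHS]expR0 ler_expR mulr_ge0 // subr_ge0 ltW.
  by have := expR_ge0 (s1 * (Y - K * (1 + e))); lra.
have : 1 <= expR (s1 * (Y - K * (1 + e))).
  by rewrite -[leLHS]expR0 ler_expR mulr_ge0 // subr_ge0 ltW.
by have := expR_ge0 (s2 * (K * (1 - e) - Y)); lra.
Qed.

Section UnitWeights.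
Variables (n : nat) (u : seq R).
Hypotheses (size_u : size u = n) (unit_u : sumsq u = 1).

Lemma sum_signed_sum_sqr : \sum_(r <- sign_vectors n) signed_sum r u ^+ 2 = 2 ^+ n.
Proof.
rewrite -size_u -(sign_sum0 (fun x => x ^+ 2)) sign_sum_sqr unit_u size_u.
by rewrite expr0n add0r mulr1.
Qed.

Lemma sum_expR_signed_sum_sqr_le s : 0 < s -> 8 * s < 1 ->
  \sum_(r <- sign_vectors n) expR (s * signed_sum r u ^+ 2) <= 2 ^+ n * expR (mgf_rate s 1).
Proof.
move=> s0 s1; rewrite -size_u -(sign_sum0 (fun x => expR (s * x ^+ 2))).
apply: le_trans (sign_sum_expR_sqr_le 0 s0 _) _; rewrite unit_u ?mulr1 //.
by rewrite size_u expr0n mulr0 expR0 mulr1 mul1r.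
Qed.

Lemma sum_signed_sum_pow4_le :
  \sum_(r <- sign_vectors n) (signed_sum r u ^+ 2) ^+ 2 <= 2048 * 2 ^+ n.
Proof.
have q_gt0 : (0 : R) < 1 / 16 by lra.
have q_small : 8 * (1 / 16) < (1 : R) by lra.
apply: le_trans (_ : \sum_(r <- sign_vectors n) 1024 * expR (1 / 16 * signed_sum r u ^+ 2) <= _).
  apply: ler_sum => r _.
  have := expR_ge_sqr (mulr_ge0 (ltW q_gt0) (sqr_ge0 (signed_sum r u))).
  set z := signed_sum r u ^+ 2.
  by rewrite (_ : (1 / 16 * z) ^+ 2 / 4 = z ^+ 2 / 1024); [lra | field].
rewrite -mulr_sumr; apply: le_trans (ler_wpM2l _ (sum_expR_signed_sum_sqr_le q_gt0 q_small)) _.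
  by lra.
have -> : mgf_rate (1 / 16) 1 = 1 / 8 :> R by rewrite /mgf_rate; field.
have e8 : expR (1 / 8) <= 8 / 7 :> R.
  apply: le_trans (expR_le_inv (_ : 1 / 8 < 1)) _; first by lra.
  by rewrite (_ : (1 - 1 / 8)^-1 = 8 / 7 :> R) //; field.
have N0 : (0 : R) <= 2 ^+ n by rewrite exprn_ge0.
by have := ler_wpM2l N0 e8; lra.
Qed.

Lemma sum_expRN_signed_sum_sqr_le s : 0 < s ->
  \sum_(r <- sign_vectors n) expR (- s * signed_sum r u ^+ 2) <=
  2 ^+ n * expR (- s + 2048 * s ^+ 2).
Proof.
move=> s0.
apply: le_trans (_ : \sum_(r <- sign_vectors n)
    (1 - s * signed_sum r u ^+ 2 + s ^+ 2 * (signed_sum r u ^+ 2) ^+ 2) <= _).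
  apply: ler_sum => r _; rewrite mulNr -exprMn.
  by apply: expRN_le; rewrite mulr_ge0 ?sqr_ge0 ?ltW.
rewrite !big_split /= sumrN -!mulr_sumr sum_signed_sum_sqr.
rewrite big_const_seq count_predT size_sign_vectors iter_addr_0 natrX.
have : s ^+ 2 * \sum_(r <- sign_vectors n) (signed_sum r u ^+ 2) ^+ 2 <= s ^+ 2 * (2048 * 2 ^+ n).
  by rewrite ler_wpM2l ?sqr_ge0 ?sum_signed_sum_pow4_le.
have := expR_ge1Dx (- s + 2048 * s ^+ 2); have : (0 : R) <= 2 ^+ n by rewrite exprn_ge0.
nra.
Qed.

(* Chernoff bounds: the parameters [e / 32] and [e / 4096] both give the rate [e ^+ 2 / 8192]. *)
Lemma upper_tail_le k e : 0 < e -> e <= 1 / 4 ->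
  \sum_(M <- sign_matrices k n) expR (e / 32 * (sketch_sqnorm M u - k%:R * (1 + e))) <=
  (2 ^+ n) ^+ k * expR (- (k%:R * e ^+ 2 / 8192)).
Proof.
move=> e_gt0 e_le.
have s_gt0 : 0 < e / 32 by lra.
have s_small : 8 * (e / 32) < 1 by lra.
have rate_le : mgf_rate (e / 32) 1 <= e / 32 * (1 + e / 2).
  have : 0 <= e ^+ 2 * (2 - e) by rewrite mulr_ge0 ?sqr_ge0 //; lra.
  by rewrite /mgf_rate mulr1 ler_pdivrMr; nra.
rewrite (eq_bigr (fun M => expR (- (e / 32 * (k%:R * (1 + e)))) *
                           expR (e / 32 * sketch_sqnorm M u)));
  last by move=> M _; rewrite -expRD; congr expR; ring.
rewrite -mulr_sumr sum_sign_matrices_expR.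
have P0 : 0 <= \sum_(r <- sign_vectors n) expR (e / 32 * signed_sum r u ^+ 2).
  by rewrite sumr_ge0 // => r _; rewrite expR_ge0.
move: (expR_pow_le k P0 (sum_expR_signed_sum_sqr_le s_gt0 s_small)).
move=> /(ler_wpM2l (expR_ge0 (- (e / 32 * (k%:R * (1 + e)))))) /le_trans; apply.
rewrite mulrCA -expRD ler_wpM2l ?exprn_ge0 // ler_expR.
have K0 : (0 : R) <= k%:R by rewrite ler0n.
have : k%:R * mgf_rate (e / 32) 1 <= k%:R * (e / 32 * (1 + e / 2)) by rewrite ler_wpM2l.
have : 0 <= k%:R * e ^+ 2 by rewrite mulr_ge0 ?sqr_ge0.
nra.
Qed.

Lemma lower_tail_le k e : 0 < e ->
  \sum_(M <- sign_matrices k n) expR (e / 4096 * (k%:R * (1 - e) - sketch_sqnorm M u)) <=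
  (2 ^+ n) ^+ k * expR (- (k%:R * e ^+ 2 / 8192)).
Proof.
move=> e_gt0.
have s_gt0 : 0 < e / 4096 by lra.
rewrite (eq_bigr (fun M => expR (e / 4096 * (k%:R * (1 - e))) *
                           expR (- (e / 4096) * sketch_sqnorm M u)));
  last by move=> M _; rewrite -expRD; congr expR; ring.
rewrite -mulr_sumr sum_sign_matrices_expR.
have P0 : 0 <= \sum_(r <- sign_vectors n) expR (- (e / 4096) * signed_sum r u ^+ 2).
  by rewrite sumr_ge0 // => r _; rewrite expR_ge0.
move: (expR_pow_le k P0 (sum_expRN_signed_sum_sqr_le s_gt0)).
move=> /(ler_wpM2l (expR_ge0 (e / 4096 * (k%:R * (1 - e))))) /le_trans; apply.
rewrite mulrCA -expRD ler_wpM2l ?exprn_ge0 // ler_expR le_eqVlt; apply/orP; left.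
by apply/eqP; field.
Qed.

Lemma count_bad_sign_matrices_le_unit k e : 0 < e -> e <= 1 / 4 ->
  (count (fun M => ~~ sketch_good k e M u) (sign_matrices k n))%:R <=
  2 * (2 ^+ n) ^+ k * expR (- (k%:R * e ^+ 2 / 8192)) :> R.
Proof.
move=> e_gt0 e_le; rewrite -sum1_count natr_sum big_mkcond /=.
apply: le_trans (_ : _ <= \sum_(M <- sign_matrices k n)
  (expR (e / 32 * (sketch_sqnorm M u - k%:R * (1 + e))) +
   expR (e / 4096 * (k%:R * (1 - e) - sketch_sqnorm M u)))) _.
  apply: ler_sum => M _; case: ifP => [bad|_]; last by rewrite addr_ge0 ?expR_ge0.
  move: bad; rewrite /sketch_good unit_u !mulr1 mulr1n.
  by apply: outside_le_expR; rewrite divr_ge0 ?ltW.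
rewrite big_split /=.
by have := upper_tail_le k e_gt0 e_le; have := lower_tail_le k e_gt0; lra.
Qed.

End UnitWeights.

Lemma count_bad_sign_matrices k n e u : 0 < e -> e <= 1 / 4 -> size u = n -> 0 < sumsq u ->
  (count (fun M => ~~ sketch_good k e M u) (sign_matrices k n))%:R <=
  2 * (2 ^+ n) ^+ k * expR (- (k%:R * e ^+ 2 / 8192)) :> R.
Proof.
move=> e_gt0 e_le size_u u_gt0; set r := (Num.sqrt (sumsq u))^-1.
have r0 : r != 0 by rewrite invr_eq0 sqrtr_eq0 -ltNge.
rewrite -(eq_count (fun M => congr1 negb (sketch_good_scale k e M u r0))).
apply: count_bad_sign_matrices_le_unit => //; first by rewrite size_map.
by rewrite sumsq_scale exprVn sqr_sqrtr ?ltW // mulfV ?gt_eqF.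
Qed.

End SketchTails.

Lemma count_has_le (T I : Type) (s : seq T) (ps : seq I) (bad : T -> I -> bool) :
  (count (fun t => has (bad t) ps) s <= \sum_(p <- ps) count (bad^~ p) s)%N.
Proof.
elim: ps => [|p ps IH] /=; first by rewrite count_pred0 big_nil.
rewrite big_cons (leq_trans _ (leq_add (leqnn _) IH)) //.
by rewrite -count_predUI leq_addr.
Qed.

Lemma exists_good_of_count (R : realFieldType) (T I : eqType) (s : seq T) (ps : seq I)
    (bad : T -> I -> bool) (B : R) :
  (forall p, (count (bad^~ p) s)%:R <= B) -> (size ps)%:R * B < (size s)%:R ->
  exists2 t, t \in s & forall p, p \in ps -> ~~ bad t p.
Proof.
move=> count_le size_lt.
have : (count (fun t => has (bad t) ps) s < size s)%N.
  rewrite -(ltr_nat R); apply: le_lt_trans size_lt.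
  apply: le_trans (_ : _ <= (\sum_(p <- ps) count (bad^~ p) s)%:R) _.
    by rewrite ler_nat count_has_le.
  rewrite natr_sum; apply: le_trans (ler_sum _ (fun p _ => count_le p)) _.
  by rewrite big_const_seq count_predT iter_addr_0 mulr_natl.
rewrite -(count_predC (fun t => has (bad t) ps)) -[X in (X < _)%N]addn0 ltn_add2l -has_count.
by case/hasP => t ts /hasPn good; exists t.
Qed.

Section Rows.
Variable R : realType.

Definition row_seq n (x : 'rV[R]_n) : seq R := [seq x ord0 j | j <- enum 'I_n].

Definition sqnorm n (x : 'rV[R]_n) : R := \sum_(j < n) x ord0 j ^+ 2.

Lemma enormE n (x : 'rV[R]_n) : enorm x = Num.sqrt (sqnorm x).
Proof. by []. Qed.

Lemma size_row_seq n (x : 'rV[R]_n) : size (row_seq x) = n.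
Proof. by rewrite size_map size_enum_ord. Qed.

Lemma sumsq_row_seq n (x : 'rV[R]_n) : sumsq (row_seq x) = sqnorm x.
Proof. by rewrite /sumsq /sqnorm big_map big_enum. Qed.

Lemma signed_sum_row_seqB t n (x y : 'rV[R]_n) :
  signed_sum t (row_seq (x - y)) = signed_sum t (row_seq x) - signed_sum t (row_seq y).
Proof. by rewrite -signed_sum_mapB; congr signed_sum; apply: eq_map => j; rewrite !mxE. Qed.

Lemma sqnorm_ge0 n (x : 'rV[R]_n) : 0 <= sqnorm x.
Proof. by rewrite sumr_ge0 // => j _; rewrite sqr_ge0. Qed.

Lemma sqnorm0 n : sqnorm (0 : 'rV[R]_n) = 0.
Proof. by rewrite /sqnorm big1 // => j _; rewrite mxE expr0n. Qed.

Lemma sqr_entry_le_sqnorm n (x : 'rV[R]_n) j : x ord0 j ^+ 2 <= sqnorm x.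
Proof. by rewrite /sqnorm (bigD1 j) //= lerDl sumr_ge0 // => i _; rewrite sqr_ge0. Qed.

Lemma sqnorm_le n (x : 'rV[R]_n) c : (forall j, x ord0 j ^+ 2 <= c) -> sqnorm x <= n%:R * c.
Proof.
move=> le_c; apply: le_trans (_ : _ <= \sum_(j < n) c) _; first exact: ler_sum.
by rewrite sumr_const card_ord mulr_natl.
Qed.

Lemma sqnormD_le n (a b : 'rV[R]_n) t : 0 < t ->
  sqnorm (a + b) <= (1 + t) * sqnorm a + (1 + t^-1) * sqnorm b.
Proof.
move=> t0; rewrite /sqnorm !mulr_sumr -big_split /=; apply: ler_sum => j _.
rewrite !mxE -subr_ge0 (_ : _ - _ = (t * a ord0 j - b ord0 j) ^+ 2 / t).
  by rewrite divr_ge0 ?sqr_ge0 ?ltW.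
by field; rewrite gt_eqF.
Qed.

Lemma sqnormD_ge n (a b : 'rV[R]_n) t : 0 < t ->
  (1 - t) * sqnorm a + (1 - t^-1) * sqnorm b <= sqnorm (a + b).
Proof.
move=> t0; rewrite /sqnorm !mulr_sumr -big_split /=; apply: ler_sum => j _.
rewrite !mxE -subr_ge0 (_ : _ - _ = (t * a ord0 j + b ord0 j) ^+ 2 / t).
  by rewrite divr_ge0 ?sqr_ge0 ?ltW.
by field; rewrite gt_eqF.
Qed.

Lemma exists_neq_entry n (x y : 'rV[R]_n) : x != y -> exists j, x ord0 j != y ord0 j.
Proof.
move=> xy; apply/existsP; apply: contraR xy => /existsPn same.
by apply/eqP/rowP => j; apply/eqP; move: (same j); rewrite negbK.
Qed.

Lemma sqnormB_gt0 n (x y : 'rV[R]_n) : x != y -> 0 < sqnorm (x - y).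
Proof.
case/exists_neq_entry => j xy; apply: lt_le_trans (sqr_entry_le_sqnorm _ j).
by rewrite !mxE exprn_even_gt0 // subr_eq0.
Qed.

Lemma sqnormB_lattice_ge n s (x y : 'rV[R]_n) : 0 <= s ->
  in_scaled_lattice s x -> in_scaled_lattice s y -> x != y -> s ^+ 2 <= sqnorm (x - y).
Proof.
move=> s0 xs ys /exists_neq_entry[j xy]; apply: le_trans (sqr_entry_le_sqnorm _ j).
have [z1 xE] := xs j; have [z2 yE] := ys j.
rewrite !mxE xE yE -mulrBr exprMn -rmorphB /= ler_peMr ?sqr_ge0 //.
have : z1 - z2 != 0 by rewrite subr_eq0; apply: contraNneq xy; rewrite xE yE => ->.
by move: (z1 - z2) => z nz; rewrite -rmorphXn ler1z; lia.
Qed.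

End Rows.

Section Sketch.
Variable R : realType.
Implicit Types (e s : R) (M : seq (seq bool)).

Definition sketch k n M (x : 'rV[R]_n) : 'rV[R]_k :=
  \row_(i < k) (signed_sum (nth [::] M i) (row_seq x) / Num.sqrt k%:R).

Definition lattice_round k s (v : 'rV[R]_k) : 'rV[R]_k :=
  \row_(i < k) ((Num.floor (v ord0 i / s))%:~R * s).

Lemma lattice_round_in_lattice k s (v : 'rV[R]_k) : in_scaled_lattice s (lattice_round s v).
Proof. by move=> i; exists (Num.floor (v ord0 i / s)); rewrite mxE mulrC. Qed.

Lemma lattice_round_err k s (v : 'rV[R]_k) i : 0 < s ->
  - s < lattice_round s v ord0 i - v ord0 i <= 0.
Proof.
move=> s0; rewrite mxE; set z := v ord0 i / s.
have -> : v ord0 i = z * s by rewrite /z divfK ?gt_eqF.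
have := floor_le z; have := floorD1_gt z; rewrite rmorphD /=.
set f := (Num.floor z)%:~R => z_lt f_le.
by apply/andP; split; nra.
Qed.

Lemma sqnorm_lattice_roundB_le k s (v w : 'rV[R]_k) : 0 < s ->
  sqnorm ((lattice_round s v - v) - (lattice_round s w - w)) <= k%:R * s ^+ 2.
Proof.
move=> s0; apply: sqnorm_le => i; rewrite !mxE.
have /andP[lo1 hi1] := lattice_round_err v i s0; have /andP[lo2 hi2] := lattice_round_err w i s0.
rewrite !mxE in lo1 hi1 lo2 hi2; nra.
Qed.

Lemma sqnorm_sketchB k n M (x y : 'rV[R]_n) : size M = k ->
  sqnorm (sketch k M x - sketch k M y) = sketch_sqnorm M (row_seq (x - y)) / k%:R.
Proof.
move=> <-; rewrite /sketch_sqnorm (big_nth [::]) big_mkord /sqnorm mulr_suml.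
apply: eq_bigr => i _; rewrite !mxE signed_sum_row_seqB -mulrBl exprMn exprVn.
by rewrite sqr_sqrtr ?ler0n.
Qed.

Lemma sketch_good_sqnorm k n e M (x y : 'rV[R]_n) : size M = k -> (0 < k)%N ->
  sketch_good k e M (row_seq (x - y)) ->
  (1 - e) * sqnorm (x - y) <= sqnorm (sketch k M x - sketch k M y) <= (1 + e) * sqnorm (x - y).
Proof.
move=> size_M k_gt0; rewrite /sketch_good sqnorm_sketchB // sumsq_row_seq.
have k0 : (0 : R) < k%:R by rewrite ltr0n.
by rewrite ler_pdivlMr // ler_pdivrMr // ![_ * k%:R]mulrC !mulrA.
Qed.

Lemma exists_good_sign_matrix k n e (D : seq 'rV[R]_n) : 0 < e -> e <= 1 / 4 ->
  (size D ^ 2)%:R * (2 * expR (- (k%:R * e ^+ 2 / 8192))) < 1 ->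
  exists2 M, size M = k &
    forall x y, x \in D -> y \in D -> x != y -> sketch_good k e M (row_seq (x - y)).
Proof.
move=> e_gt0 e_le small.
set B := 2 * (2 ^+ n) ^+ k * expR (- (k%:R * e ^+ 2 / 8192)).
have P_gt0 : (0 : R) < (2 ^+ n) ^+ k by rewrite !exprn_gt0.
pose bad M (p : 'rV[R]_n * 'rV[R]_n) :=
  (p.1 != p.2) && ~~ sketch_good k e M (row_seq (p.1 - p.2)).
have count_le p : (count (bad^~ p) (sign_matrices k n))%:R <= B.
  case: p => x y; rewrite /bad /=; have [<-|xy] := eqVneq x y.
    by rewrite count_pred0 !mulr_ge0 ?exprn_ge0 ?expR_ge0.
  apply: count_bad_sign_matrices => //; first exact: size_row_seq.
  by rewrite sumsq_row_seq sqnormB_gt0.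
have size_lt : (size [seq (x, y) | x <- D, y <- D])%:R * B < (size (sign_matrices k n))%:R.
  rewrite size_allpairs mulnn size_sign_matrices !natrX; rewrite natrX in small.
  have -> : (size D)%:R ^+ 2 * B =
      (size D)%:R ^+ 2 * (2 * expR (- (k%:R * e ^+ 2 / 8192))) * (2 ^+ n) ^+ k.
    by rewrite /B; ring.
  by rewrite -[ltRHS]mul1r ltr_pM2r.
have [M M_in good] := exists_good_of_count count_le size_lt.
exists M; first exact: size_mem_sign_matrices M_in.
move=> x y xD yD xy; have := good (x, y); rewrite /bad /= xy /= negbK; apply.
by apply/allpairsP; exists (x, y).
Qed.

Lemma sign_matrix_failure_lt1 m k e : 0 < e -> (1 < m)%N ->
  4 * 8192 / e ^+ 2 * ln m%:R <= k%:R ->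
  (m ^ 2)%:R * (2 * expR (- (k%:R * e ^+ 2 / 8192))) < 1 :> R.
Proof.
move=> e_gt0 m_gt1 k_ge.
have m_ge2 : (2 : R) <= m%:R by rewrite ler_nat.
have e2_gt0 : 0 < e ^+ 2 by rewrite exprn_gt0.
have exp_le : expR (- (k%:R * e ^+ 2 / 8192)) <= (m%:R ^+ 4)^-1.
  have -> : (m%:R ^+ 4)^-1 = expR (- (4%:R * ln (m%:R : R))).
    by rewrite expRN expRM_natl lnK // posrE ltr0n ltnW.
  rewrite ler_expR lerN2.
  have -> : 4%:R * ln (m%:R : R) = 4 * 8192 / e ^+ 2 * ln m%:R * (e ^+ 2 / 8192).
    by field; rewrite gt_eqF.
  by rewrite -[leRHS]mulrA; apply: ler_wpM2r k_ge; rewrite divr_ge0 ?ltW.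
have m_gt0 : (0 : R) < m%:R by rewrite ltr0n ltnW.
rewrite mulrA; apply: le_lt_trans (ler_wpM2l _ exp_le) _; first by rewrite mulr_ge0.
have -> : (m ^ 2)%:R * 2 * (m%:R ^+ 4)^-1 = 2 / m%:R ^+ 2 :> R.
  by rewrite natrX; field; rewrite gt_eqF.
by rewrite ltr_pdivrMr ?exprn_gt0 //; nra.
Qed.

Lemma exists_good_sign_matrix_log k n e (D : seq 'rV[R]_n) : 0 < e -> e <= 1 / 4 ->
  (0 < size D)%N -> 4 * 8192 / e ^+ 2 * ln (size D)%:R <= k%:R ->
  exists2 M, size M = k &
    forall x y, x \in D -> y \in D -> x != y -> sketch_good k e M (row_seq (x - y)).
Proof.
move=> e_gt0 e_le D_gt0 k_ge; have [D_gt1|D_le1] := ltnP 1 (size D).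
  by apply: exists_good_sign_matrix => //; apply: sign_matrix_failure_lt1.
exists (nseq k [::]); first exact: size_nseq.
case: D D_gt0 D_le1 {k_ge} => [|z [|? ?]] //= _ _ x y.
by rewrite !inE => /eqP -> /eqP ->; rewrite eqxx.
Qed.

Lemma sqnormD_perturb k (a b : 'rV[R]_k) e S : 0 < e -> e <= 1 / 4 ->
  (1 - e) * S <= sqnorm a <= (1 + e) * S -> sqnorm b <= e ^+ 2 / 4 * S ->
  (1 - 2 * e) ^+ 2 * S <= sqnorm (a + b) <= (1 + 2 * e) ^+ 2 * S.
Proof.
move=> e_gt0 e_le /andP[a_ge a_le] b_le.
have S_ge0 : 0 <= S by nra.
have eb_le : e^-1 * sqnorm b <= e / 4 * S.
  by rewrite mulrC ler_pdivrMr // (_ : e / 4 * S * e = e ^+ 2 / 4 * S) //; field.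
have := sqnormD_le a b e_gt0; have := sqnormD_ge a b e_gt0.
have : (1 + e) * sqnorm a <= (1 + e) * ((1 + e) * S) by rewrite ler_wpM2l //; lra.
have : (1 - e) * ((1 - e) * S) <= (1 - e) * sqnorm a by rewrite ler_wpM2l //; lra.
have := sqnorm_ge0 b; have := mulr_ge0 (ltW e_gt0) S_ge0.
have := mulr_ge0 (sqr_ge0 e) S_ge0.
by move=> e2S eS b0 a_lo a_up lo up; apply/andP; split; nra.
Qed.

Lemma rounded_sketch_sqnorm k n M e s (x y : 'rV[R]_n) :
  size M = k -> (0 < k)%N -> 0 < e -> e <= 1 / 4 -> 0 < s ->
  k%:R * s ^+ 2 <= e ^+ 2 / 4 * sqnorm (x - y) -> sketch_good k e M (row_seq (x - y)) ->
  (1 - 2 * e) ^+ 2 * sqnorm (x - y)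
    <= sqnorm (lattice_round s (sketch k M x) - lattice_round s (sketch k M y))
    <= (1 + 2 * e) ^+ 2 * sqnorm (x - y).
Proof.
move=> size_M k_gt0 e_gt0 e_le s_gt0 err_le good.
set u := sketch k M x; set v := sketch k M y.
have -> : lattice_round s u - lattice_round s v =
    (u - v) + ((lattice_round s u - u) - (lattice_round s v - v)).
  by apply/rowP => i; rewrite !mxE; ring.
apply: sqnormD_perturb => //; first exact: sketch_good_sqnorm.
exact: le_trans (sqnorm_lattice_roundB_le _ _ s_gt0) err_le.
Qed.

Lemma enorm_sandwich n m (v : 'rV[R]_n) (w : 'rV[R]_m) lo hi : 0 <= lo -> 0 <= hi ->
  lo ^+ 2 * sqnorm v <= sqnorm w <= hi ^+ 2 * sqnorm v ->
  lo * enorm v <= enorm w <= hi * enorm v.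
Proof.
move=> lo0 hi0 /andP[lo_le le_hi]; rewrite !enormE.
rewrite -[lo]ger0_norm // -[hi]ger0_norm // -!sqrtr_sqr -!sqrtrM ?sqr_ge0 //.
by rewrite !ler_sqrt ?lo_le ?le_hi ?sqnorm_ge0 ?mulr_ge0 ?sqr_ge0 ?sqnorm_ge0.
Qed.

Lemma rounding_err_le (k l l0 : nat) e S : 0 < e -> (0 < l0)%N ->
  4 * k%:R / e ^+ 2 < l%:R -> (l%:R / l0%:R) ^+ 2 <= S ->
  k%:R * (1 / l0%:R) ^+ 2 <= e ^+ 2 / 4 * S.
Proof.
move=> e_gt0 l0_gt0 l_gt sep.
have e2_gt0 : 0 < e ^+ 2 by rewrite exprn_gt0.
have k_le : k%:R <= e ^+ 2 / 4 * l%:R.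
  by move: l_gt; rewrite ltr_pdivrMr // => /ltW; lra.
have l_ge1 : (1 : R) <= l%:R.
  rewrite ler1n -(ltr0n R); apply: le_lt_trans l_gt.
  by rewrite divr_ge0 ?mulr_ge0 ?ler0n ?ltW.
set w := (1 / l0%:R) ^+ 2; have w_gt0 : 0 < w by rewrite exprn_gt0 ?divr_gt0 ?ltr0n.
have sep' : l%:R ^+ 2 * w <= S by rewrite /w -exprMn mulrC div1r mulrC.
have e24_ge0 : 0 <= e ^+ 2 / 4 by rewrite divr_ge0 ?ltW.
have : 0 <= (e ^+ 2 / 4 * l%:R - k%:R) * w by rewrite mulr_ge0 ?subr_ge0 // ltW.
have : 0 <= e ^+ 2 / 4 * ((l%:R ^+ 2 - l%:R) * w).
  have l_le : l%:R <= l%:R ^+ 2 :> R by rewrite expr2 ler_peMl // (le_trans ler01).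
  by apply: mulr_ge0 => //; apply: mulr_ge0; [rewrite subr_ge0 | exact: ltW].
have : 0 <= e ^+ 2 / 4 * (S - l%:R ^+ 2 * w) by rewrite mulr_ge0 ?subr_ge0.
nra.
Qed.

Lemma lattice_embedding n k e (l0 l : nat) (D : seq 'rV[R]_n) :
  0 < e -> e <= 1 / 4 -> (0 < l0)%N -> (0 < k)%N -> (0 < size D)%N ->
  4 * 8192 / e ^+ 2 * ln (size D)%:R <= k%:R -> 4 * k%:R / e ^+ 2 < l%:R ->
  {in D, forall x, in_scaled_lattice (l%:R / l0%:R) x} ->
  exists F : 'rV[R]_n -> 'rV[R]_k,
    {in D, forall x, in_scaled_lattice (1 / l0%:R) (F x)} /\
    {in D &, forall x y,
      (1 - 2 * e) * enorm (x - y) <= enorm (F x - F y) <= (1 + 2 * e) * enorm (x - y)}.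
Proof.
move=> e_gt0 e_le l0_gt0 k_gt0 D_gt0 k_ge l_gt D_lattice.
have [M size_M good] := exists_good_sign_matrix_log e_gt0 e_le D_gt0 k_ge.
exists (lattice_round (1 / l0%:R) \o sketch k M); split => [x _|x y xD yD /=].
  exact: lattice_round_in_lattice.
have [<-|xy] := eqVneq x y; first by rewrite !subrr !enormE !sqnorm0 sqrtr0 !mulr0 lexx.
have l0R : (0 : R) < l0%:R by rewrite ltr0n.
have sep : (l%:R / l0%:R) ^+ 2 <= sqnorm (x - y).
  by apply: sqnormB_lattice_ge (D_lattice x xD) (D_lattice y yD) xy; rewrite divr_ge0.
have err_le := rounding_err_le e_gt0 l0_gt0 l_gt sep.
apply: enorm_sandwich; rewrite ?subr_ge0 ?addr_ge0 //; try lra.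
apply: rounded_sketch_sqnorm => //; [by rewrite divr_gt0 | exact: good].
Qed.

End Sketch.

Unset Implicit Arguments.

Theorem mainTheorem1 (R : realType) (eps : R) (heps0 : 0 < eps) :
  exists c : R, 0 < c /\
  forall (d lambda0 N0 : nat), (0 < d)%N -> (0 < lambda0)%N ->
    eps < 1 / (lambda0%:R + 1) ->
  forall k : nat, (0 < k)%N -> c * ln (d%:R : R) <= k%:R ->
  exists lambda1 : nat,
  forall lambda : nat, (lambda1 <= lambda)%N ->
  forall D : seq 'rV[R]_d,
    uniq D -> size D = d ->
    (forall x, x \in D ->
       in_scaled_lattice (lambda%:R / lambda0%:R) x /\
       in_ball (lambda%:R * N0%:R) x) ->
  exists F : 'rV[R]_d -> 'rV[R]_k,
    (forall x, x \in D -> in_scaled_lattice (1 / lambda0%:R) (F x)) /\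
    (forall x y, x \in D -> y \in D ->
       (1 - eps - eps / (lambda%:R * lambda0%:R)) * enorm (x - y)
         <= enorm (F x - F y) /\
       enorm (F x - F y)
         <= (1 + eps + eps / (lambda%:R * lambda0%:R)) * enorm (x - y)).
Proof.
have e_gt0 : 0 < eps / 2 by rewrite divr_gt0.
exists (4 * 8192 / (eps / 2) ^+ 2); split; first by apply: divr_gt0; [lra | rewrite exprn_gt0].
move=> d l0 N0 d_gt0 l0_gt0 eps_lt k k_gt0 k_ge.
have e_le : eps / 2 <= 1 / 4.
  suff : eps < 1 / 2 by lra.
  apply: lt_le_trans eps_lt _.
  have l0_ge1 : (1 : R) <= l0%:R by rewrite ler1n.
  by rewrite ler_pdivrMr; lra.
exists (Num.truncn (4 * k%:R / (eps / 2) ^+ 2)).+1 => l l_ge D _ size_D D_in.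
have l_gt : 4 * k%:R / (eps / 2) ^+ 2 < l%:R.
  by apply: lt_le_trans (truncnS_gt _) _; rewrite ler_nat.
have D_gt0 : (0 < size D)%N by rewrite size_D.
have k_ge' : 4 * 8192 / (eps / 2) ^+ 2 * ln (size D)%:R <= k%:R by rewrite size_D.
have D_lattice : {in D, forall x, in_scaled_lattice (l%:R / l0%:R) x} by move=> x /D_in[].
have [F [F_lattice F_dist]] := lattice_embedding e_gt0 e_le l0_gt0 k_gt0 D_gt0 k_ge' l_gt D_lattice.
exists F; split => [|x y xD yD]; first exact: F_lattice.
have /andP[lo hi] := F_dist x y xD yD.
have : 0 <= eps / (l%:R * l0%:R) * enorm (x - y).
  by rewrite !mulr_ge0 ?invr_ge0 ?mulr_ge0 ?ler0n ?sqrtr_ge0 ?ltW.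
by split; [apply: le_trans lo | apply: le_trans hi _]; nra.
Qed.
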